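(* For every integer $r\ge2$, \[K_{A_r}(2\alpha_1+2\alpha_2+\cdots+2\alpha_r)=\frac{(5-\sqrt5)^r+(5+\sqrt5)^r}{5\cdot 2^r}.\]
   Context: $\varepsilon_1,\dots,\varepsilon_{r+1}$ is the standard basis of $\mathbb{R}^{r+1}$, $\alpha_i=\varepsilon_i-\varepsilon_{i+1}$, so $2\alpha_1+\cdots+2\alpha_r=2\varepsilon_1-2\varepsilon_{r+1}$. $\Phi^+_{A_r}=\{\varepsilon_i-\varepsilon_j:1\le i<j\le r+1\}$ and $K_{A_r}(\mu)$ is the number of finite multisets of elements of $\Phi^+_{A_r}$ summing to $\mu$. *)

From HB Require Import structures.
From mathcomp Require Import all_boot all_order all_algebra.
Set Implicit Arguments. Unset Strict Implicit. Unset Printing Implicit Defensive.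
Import Order.TTheory GRing.Theory Num.Theory.

(* Coordinates of R^{r+1} are indexed by 'I_(r.+1) (0-based: eps_1 .. eps_{r+1}
   become indices 0 .. r).  A positive root eps_i - eps_j (i<j) of A_r is
   encoded by the pair (i,j) with i < j. *)
Definition posroot (r : nat) := {p : 'I_r.+1 * 'I_r.+1 | p.1 < p.2}.

Definition multiset_root (r : nat) := {ffun posroot r -> nat}.

Definition ms_sum (r : nat) (m : multiset_root r) (k : 'I_r.+1) : int :=
  (\sum_(a : posroot r)
     (m a)%:Z * (((k == (val a).1) : nat)%:Z - ((k == (val a).2) : nat)%:Z))%R.

(* Coordinates of 2 alpha_1 + ... + 2 alpha_r = 2 eps_1 - 2 eps_{r+1}. *)
Definition two_rho_coord (r : nat) (k : 'I_r.+1) : int :=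
  (2 * ((k == ord0) : nat)%:Z - 2 * ((k == ord_max) : nat)%:Z)%R.

(* s enumerates, without repetition, exactly the multisets of positive roots
   of A_r summing to mu; hence size s = K_{A_r}(mu). *)
Definition kostant_enum (r : nat) (mu : 'I_r.+1 -> int) (s : seq (multiset_root r)) :=
  uniq s /\ (forall m : multiset_root r, m \in s <-> (forall k, ms_sum m k = mu k)).

From HB Require Import structures.
From mathcomp Require Import all_boot all_order all_algebra.
From mathcomp Require Import zify ring.
From Stdlib Require Import FunctionalExtensionality.
Import Order.TTheory GRing.Theory Num.Theory.
Set Implicit Arguments. Unset Strict Implicit. Unset Printing Implicit Defensive.

(* A multiset of positive roots eps_i - eps_j of A_N is a flow on the vertices
   0, ..., N carrying h i j parallel edges i -> j (i < j); the k-th coordinate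
   of its sum is the outflow minus the inflow at k.  Let P_N count the flows
   with demand 2 eps_0 - 2 eps_N and R_N those with demand
   eps_0 + eps_1 - 2 eps_N and no edge 0 -> 1.  Fixing the multiplicity of the
   edge 0 -> 1 (0, 1 or 2) of a P-flow, resp. of the edges 0 -> 2 and 1 -> 2
   (0 or 1 each) of an R-flow, removing these edges and deleting the vertices
   they leave isolated gives
     P_(N+1) = 2 P_N + R_(N+1)   and   R_(N+2) = 3 R_(N+1) + P_N.
   Hence P_(N+2) = 5 P_(N+1) - 5 P_N with P_1 = 1 and P_2 = 3, whose solution
   is ((5 - sqrt 5)^N + (5 + sqrt 5)^N) / (5 * 2^N). *)

Definition flow := nat -> nat -> nat.

Definition outflow N (h : flow) k := \sum_(j < N.+1) h k j.
Definition inflow N (h : flow) k := \sum_(i < N.+1) h i k.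

Definition flow_on N (h : flow) := forall i j, ~~ ((i < j) && (j <= N)) -> h i j = 0.

Definition is_flow N (d : nat -> int) (h : flow) :=
  flow_on N h /\ forall k, k <= N -> ((outflow N h k)%:Z - (inflow N h k)%:Z)%R = d k.

Definition flow_of_roots N (m : multiset_root N) : flow := fun i j =>
  \sum_(a : posroot N | ((val a).1 == i :> nat) && ((val a).2 == j :> nat)) m a.

Definition roots_of_flow N (h : flow) : multiset_root N :=
  [ffun a : posroot N => h (val a).1 (val a).2].

Lemma no_posroot N i j : ~~ ((i < j) && (j <= N)) ->
  forall a : posroot N, ((val a).1 == i :> nat) && ((val a).2 == j :> nat) = false.
Proof.
move=> Nij [[x y] /= xy]; apply/negbTE/negP => /andP [/eqP xi /eqP yj].
by move: Nij; rewrite -xi -yj xy -ltnS ltn_ord.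
Qed.

Lemma flow_of_roots_on N (m : multiset_root N) : flow_on N (flow_of_roots m).
Proof. by move=> i j Nij; rewrite /flow_of_roots big_pred0 //; apply: no_posroot. Qed.

Lemma flow_of_rootsK N : cancel (@flow_of_roots N) (roots_of_flow N).
Proof. by move=> m; apply/ffunP => a; rewrite ffunE /flow_of_roots (big_pred1 a). Qed.

Lemma roots_of_flowK N h : flow_on N h -> flow_of_roots (roots_of_flow N h) = h.
Proof.
move=> hN; apply: functional_extensionality => i; apply: functional_extensionality => j.
have [/andP [lij ljN]|Nij] := boolP ((i < j) && (j <= N)); last first.
  by rewrite hN // /flow_of_roots big_pred0 //; apply: no_posroot.
have ho : (inord i : 'I_N.+1) < (inord j : 'I_N.+1) by rewrite !inordK //; lia.
rewrite /flow_of_roots (big_pred1 (exist _ (inord i, inord j) ho)).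
  by rewrite ffunE /= !inordK //; lia.
move=> [[x y] xy] /=; rewrite /pred1 /= -val_eqE /= xpair_eqE.
by rewrite -!val_eqE /= !inordK //; lia.
Qed.

Lemma outflow_of_roots N (m : multiset_root N) (k : 'I_N.+1) :
  outflow N (flow_of_roots m) k = \sum_(a : posroot N) m a * (k == (val a).1).
Proof.
rewrite /outflow /flow_of_roots.
under eq_bigr => j _ do rewrite big_mkcond.
rewrite exchange_big; apply: eq_bigr => a _ /=.
have [ka|nka] := eqVneq k (val a).1.
  rewrite muln1 -big_mkcond /= (big_pred1 (val a).2) // => j.
  by rewrite /pred1 /= ka eqxx /= eq_sym.
rewrite muln0 big1 // => j _; case: ifP => // /andP [/eqP ka _].
by move: nka; rewrite -val_eqE /= ka eqxx.
Qed.

Lemma inflow_of_roots N (m : multiset_root N) (k : 'I_N.+1) :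
  inflow N (flow_of_roots m) k = \sum_(a : posroot N) m a * (k == (val a).2).
Proof.
rewrite /inflow /flow_of_roots.
under eq_bigr => j _ do rewrite big_mkcond.
rewrite exchange_big; apply: eq_bigr => a _ /=.
have [ka|nka] := eqVneq k (val a).2.
  rewrite muln1 -big_mkcond /= (big_pred1 (val a).1) // => j.
  by rewrite /pred1 /= ka eqxx andbT eq_sym.
rewrite muln0 big1 // => j _; case: ifP => // /andP [_ /eqP ka].
by move: nka; rewrite -val_eqE /= ka eqxx.
Qed.

Lemma ms_sum_flow N (m : multiset_root N) (k : 'I_N.+1) :
  ms_sum m k =
    ((outflow N (flow_of_roots m) k)%:Z - (inflow N (flow_of_roots m) k)%:Z)%R.
Proof.
rewrite outflow_of_roots inflow_of_roots /ms_sum.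
rewrite !(big_morph Posz PoszD (erefl (Posz 0))) -sumrB.
by apply: eq_bigr => a _; rewrite mulrBr !PoszM.
Qed.

Definition flow_count N (P : flow -> Prop) k := exists s : seq (multiset_root N),
  [/\ uniq s, forall m, m \in s <-> P (flow_of_roots m) & size s = k].

Lemma flow_count_ext N (P Q : flow -> Prop) k :
  (forall h, flow_on N h -> P h <-> Q h) -> flow_count N P k -> flow_count N Q k.
Proof.
move=> PQ [s [us sP <-]]; exists s; split=> // m.
by rewrite sP; apply: PQ; apply: flow_of_roots_on.
Qed.

Lemma flow_countU N (P Q : flow -> Prop) a b :
  (forall h, P h -> Q h -> False) -> flow_count N P a -> flow_count N Q b ->
  flow_count N (fun h => P h \/ Q h) (a + b).
Proof.
move=> PQ [s [us sP <-]] [t [ut tQ <-]]; exists (s ++ t); split.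
- rewrite cat_uniq us ut andbT /=; apply/hasPn => m /tQ Qm.
  by apply/negP => /sP Pm; apply: PQ Pm Qm.
- move=> m; rewrite mem_cat; split; first by case/orP => [/sP|/tQ]; auto.
  by case=> [/sP|/tQ] ->; rewrite ?orbT.
- by rewrite size_cat.
Qed.

Lemma flow_count1 N (P : flow -> Prop) h0 : flow_on N h0 -> P h0 ->
  (forall h, flow_on N h -> P h -> h = h0) -> flow_count N P 1.
Proof.
move=> h0N Ph0 uniqP; exists [:: roots_of_flow N h0]; split=> // m.
rewrite inE; split; first by move/eqP ->; rewrite roots_of_flowK.
by move=> /(uniqP _ (flow_of_roots_on m)) <-; rewrite flow_of_rootsK.
Qed.

Lemma flow_count_bij N N' (P Q : flow -> Prop) (F : flow -> flow) k :
  (forall h, P h -> flow_on N h) -> (forall h, Q h -> flow_on N' h) ->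
  (forall h, P h -> Q (F h)) ->
  (forall h1 h2, P h1 -> P h2 -> F h1 = F h2 -> h1 = h2) ->
  (forall h', Q h' -> exists2 h, P h & F h = h') ->
  flow_count N P k -> flow_count N' Q k.
Proof.
move=> PN QN PQ Finj Fsurj [s [us sP <-]].
exists [seq roots_of_flow N' (F (flow_of_roots m)) | m <- s]; split.
- rewrite map_inj_in_uniq // => m1 m2 /sP P1 /sP P2 /(congr1 (@flow_of_roots N')).
  rewrite !roots_of_flowK; try by apply/QN/PQ.
  by move=> /(Finj _ _ P1 P2) /(congr1 (roots_of_flow N)); rewrite !flow_of_rootsK.
- move=> m'; split.
    by case/mapP => m /sP /PQ Qm ->; rewrite roots_of_flowK //; apply: QN.
  move=> /Fsurj [h Ph Fh]; apply/mapP; exists (roots_of_flow N h).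
    by apply/sP; rewrite roots_of_flowK //; apply: PN.
  by rewrite roots_of_flowK ?Fh ?flow_of_rootsK //; apply: PN.
- by rewrite size_map.
Qed.

Lemma sum_ord_bump N v (G : nat -> nat) : v <= N ->
  \sum_(j < N.+1) G j = G v + \sum_(j < N) G (bump v j).
Proof. by move=> vN; rewrite (bigD1_ord (inord v)) //= inordK. Qed.

Lemma leq_term_sum_ord N (G : nat -> nat) j : j <= N -> G j <= \sum_(i < N.+1) G i.
Proof. by move=> jN; rewrite (sum_ord_bump G jN) leq_addr. Qed.

Lemma bumpE v x : bump v x = if v <= x then x.+1 else x.
Proof. by rewrite /bump; case: leqP. Qed.

Lemma unbumpE v x : unbump v x = if v < x then x.-1 else x.
Proof. by rewrite /unbump; case: ltnP => _; rewrite ?subn1 ?subn0. Qed.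

Lemma bump_eq v x : (bump v x == v) = false.
Proof. by rewrite eq_sym (negbTE (neq_bump _ _)). Qed.

Lemma is_flow_ext N (d d' : nat -> int) h : (forall k, k <= N -> d' k = d k) ->
  is_flow N d h -> is_flow N d' h.
Proof. by move=> dd' [hN hd]; split=> // k kN; rewrite dd' // hd. Qed.

Lemma leq_edge_outflow N h i j : j <= N -> h i j <= outflow N h i.
Proof. exact: (leq_term_sum_ord (h i)). Qed.

Lemma inflow_lt N h k : flow_on N h -> k <= N -> inflow N h k = \sum_(i < k) h i k.
Proof.
move=> hN kN; rewrite /inflow (big_ord_widen _ (fun i => h i k) (leqW kN)).
rewrite [RHS]big_mkcond; apply: eq_bigr => i _; case: ifP => // ik.
by apply: hN; rewrite ik.
Qed.

Lemma inflow0 N h : flow_on N h -> inflow N h 0 = 0.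
Proof. by move=> hN; rewrite inflow_lt // big_ord0. Qed.

Lemma inflow1 N h : flow_on N h -> 1 <= N -> inflow N h 1 = h 0 1.
Proof. by move=> hN N1; rewrite inflow_lt // big_ord1. Qed.

Lemma inflow2 N h : flow_on N h -> 2 <= N -> inflow N h 2 = h 0 2 + h 1 2.
Proof. by move=> hN N2; rewrite inflow_lt // big_ord_recr big_ord1. Qed.

Definition flow_upd a b c (h : flow) : flow :=
  fun i j => if (i == a) && (j == b) then c else h i j.

Lemma outflow_upd N a b c h k : b <= N -> h a b = 0 ->
  outflow N (flow_upd a b c h) k = outflow N h k + (if k == a then c else 0).
Proof.
move=> bN hab; rewrite /outflow; have [->|nka] := eqVneq k a; last first.
  by rewrite addn0; apply: eq_bigr => j _; rewrite /flow_upd (negbTE nka).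
rewrite !(sum_ord_bump _ bN) /flow_upd !eqxx /= hab add0n addnC; congr (_ + _).
by apply: eq_bigr => j _; rewrite bump_eq.
Qed.

Lemma inflow_upd N a b c h k : a <= N -> h a b = 0 ->
  inflow N (flow_upd a b c h) k = inflow N h k + (if k == b then c else 0).
Proof.
move=> aN hab; rewrite /inflow; have [->|nkb] := eqVneq k b; last first.
  by rewrite addn0; apply: eq_bigr => i _; rewrite /flow_upd (negbTE nkb) andbF.
rewrite (sum_ord_bump (fun i => flow_upd a b c h i b) aN).
rewrite (sum_ord_bump (fun i => h i b) aN) /flow_upd !eqxx /= hab add0n addnC.
by congr (_ + _); apply: eq_bigr => i _; rewrite bump_eq.
Qed.

Definition demand_shift (d : nat -> int) a b c x : int :=
  (d x - (if x == a then c%:Z else 0) + (if x == b then c%:Z else 0))%R.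

Lemma flow_count_edge N (d : nat -> int) a b c (Q : flow -> Prop) k :
  a < b -> b <= N ->
  flow_count N (fun h =>
    is_flow N (demand_shift d a b c) h /\ h a b = 0 /\ Q (flow_upd a b c h)) k ->
  flow_count N (fun h => is_flow N d h /\ h a b = c /\ Q h) k.
Proof.
move=> ab bN; have aN : a <= N by lia.
apply: (flow_count_bij (F := flow_upd a b c)).
- by move=> h [[]].
- by move=> h [[]].
- move=> h [[hN hd] [hab Qh]]; split; last by rewrite /flow_upd !eqxx.
  split.
    move=> i j Nij; rewrite /flow_upd; case: ifP => [/andP [/eqP ia /eqP jb]|_].
      by move: Nij; rewrite ia jb ab bN.
    exact: hN.
  move=> x xN; rewrite outflow_upd // inflow_upd //; have := hd x xN.
  rewrite /demand_shift.
  by case: (x =P a) => xa; case: (x =P b) => xb; lia.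
- move=> h1 h2 [_ [h1ab _]] [_ [h2ab _]] E.
  apply: functional_extensionality => i; apply: functional_extensionality => j.
  have := congr1 (fun f => f i j) E; rewrite /flow_upd.
  by case: ifP => [/andP [/eqP -> /eqP ->]|] //; rewrite h1ab h2ab.
- move=> h [[hN hd] [hab Qh]].
  have updK : flow_upd a b c (flow_upd a b 0 h) = h.
    apply: functional_extensionality => i; apply: functional_extensionality => j.
    by rewrite /flow_upd; case: ifP => [/andP [/eqP -> /eqP ->]|->].
  have h0ab : flow_upd a b 0 h a b = 0 by rewrite /flow_upd !eqxx.
  exists (flow_upd a b 0 h) => //; split; last by rewrite updK.
  split=> [i j Nij|x xN]; first by rewrite /flow_upd; case: ifP => // _; apply: hN.
  have := hd x xN; have := outflow_upd c x bN h0ab; have := inflow_upd c x aN h0ab.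
  rewrite updK /demand_shift => -> ->.
  by case: (x =P a) => xa; case: (x =P b) => xb; lia.
Qed.

Definition flow_ins v (h : flow) : flow := fun i j =>
  if (i == v) || (j == v) then 0 else h (unbump v i) (unbump v j).
Definition flow_del v (h : flow) : flow := fun i j => h (bump v i) (bump v j).
Definition isolated v (h : flow) := forall j, h v j = 0 /\ h j v = 0.

Lemma flow_insK v : cancel (flow_ins v) (flow_del v).
Proof.
move=> h; apply: functional_extensionality => i; apply: functional_extensionality => j.
by rewrite /flow_ins /flow_del !bump_eq /= !bumpK.
Qed.

Lemma flow_delK v h : isolated v h -> flow_ins v (flow_del v h) = h.
Proof.
move=> hv; apply: functional_extensionality => i; apply: functional_extensionality => j.
rewrite /flow_ins /flow_del; have [->|iv] := eqVneq i v; first by rewrite (proj1 (hv j)).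
have [->|jv] := eqVneq j v; first by rewrite (proj2 (hv i)).
by rewrite /= !unbumpKcond (negbTE iv) (negbTE jv).
Qed.

Lemma isolated_of_inflow0 N d h v :
  is_flow N d h -> v <= N -> d v = 0%R -> inflow N h v = 0 -> isolated v h.
Proof.
move=> [hN hd] vN dv inv.
have outv : outflow N h v = 0 by have := hd v vN; rewrite dv inv; lia.
move=> j; have [jN|Nj] := leqP j N; last by split; apply: hN; lia.
split; first by have := leq_edge_outflow h v jN; rewrite outv; lia.
by have := leq_term_sum_ord (fun i => h i v) jN; rewrite -/(inflow N h v) inv; lia.
Qed.

Lemma is_flow_ins N (d : nat -> int) v h : v <= N.+1 -> d v = 0%R ->
  is_flow N (fun x => d (bump v x)) h -> is_flow N.+1 d (flow_ins v h).
Proof.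
move=> vN dv [hN hd]; split=> [i j Nij|x xN].
  rewrite /flow_ins; case: (i =P v) => // iv; case: (j =P v) => //= jv.
  apply: hN; move: Nij; rewrite !unbumpE.
  by case: (ltnP v i) => vi; case: (ltnP v j) => vj; lia.
have [->|xv] := eqVneq x v.
  by rewrite dv /outflow /inflow !big1 // => i _; rewrite /flow_ins eqxx ?orbT.
have uxN : unbump v x <= N by rewrite unbumpE; case: (ltnP v x) => /=; lia.
have := hd _ uxN; rewrite unbumpKcond (negbTE xv) add0n => <-.
rewrite /outflow /inflow (sum_ord_bump (fun j => flow_ins v h x j) vN).
rewrite (sum_ord_bump (fun i => flow_ins v h i x) vN) /flow_ins eqxx (negbTE xv).
rewrite !orbT /= !add0n; congr (_ - _)%R; congr Posz.
  by apply: eq_bigr => j _; rewrite bump_eq ?orbF bumpK.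
by apply: eq_bigr => i _; rewrite bump_eq bumpK.
Qed.

Lemma is_flow_del N (d : nat -> int) v h : v <= N.+1 ->
  is_flow N.+1 d h -> isolated v h -> is_flow N (fun x => d (bump v x)) (flow_del v h).
Proof.
move=> vN [hN hd] hv; split=> [i j Nij|x xN].
  rewrite /flow_del; apply: hN; move: Nij; rewrite !bumpE.
  by case: (leqP v i) => vi; case: (leqP v j) => vj /=; lia.
have bxN : bump v x <= N.+1 by rewrite bumpE; case: (leqP v x) => /=; lia.
rewrite -(hd _ bxN) /outflow /inflow (sum_ord_bump (fun j => h (bump v x) j) vN).
by rewrite (sum_ord_bump (fun i => h i (bump v x)) vN) (proj1 (hv _)) (proj2 (hv _)).
Qed.

Lemma flow_count_del_vertex N (d : nat -> int) v (Q : flow -> Prop) k :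
  v <= N -> d v = 0%R ->
  flow_count N (fun h => is_flow N (fun x => d (bump v x)) h /\ Q (flow_ins v h)) k ->
  flow_count N.+1 (fun h => is_flow N.+1 d h /\ inflow N.+1 h v = 0 /\ Q h) k.
Proof.
move=> vN dv; have vN1 : v <= N.+1 by lia.
apply: (flow_count_bij (F := flow_ins v)).
- by move=> h [[]].
- by move=> h [[]].
- move=> h [hd Qh]; split; first exact: is_flow_ins.
  by split=> //; rewrite /inflow big1 // => i _; rewrite /flow_ins eqxx orbT.
- by move=> h1 h2 _ _ /(congr1 (flow_del v)); rewrite !flow_insK.
- move=> h [hd [inv Qh]]; have hv := isolated_of_inflow0 hd vN1 dv inv.
  by exists (flow_del v h); rewrite ?flow_delK //; split=> //; apply: is_flow_del.
Qed.

Definition rho_demand (N k : nat) : int :=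
  if k == 0 then 2%R else if k == N then (-2)%R else 0%R.
Definition split_demand (N k : nat) : int :=
  if k == 0 then 1%R else if k == 1 then 1%R else if k == N then (-2)%R else 0%R.

Definition rho_flow N h := is_flow N (rho_demand N) h.
Definition split_flow N h := is_flow N (split_demand N) h /\ h 0 1 = 0.

Ltac solve_demand := let k := fresh "k" in let kN := fresh "kN" in
  move=> k kN; rewrite /demand_shift /rho_demand /split_demand ?bumpE;
  case: k kN => [|[|[|k]]] kN //=; repeat (case: eqP => ? //=); try lia.

Lemma rho_flow_count1 : flow_count 1 (rho_flow 1) 1.
Proof.
pose h0 : flow := fun i j => if (i == 0) && (j == 1) then 2 else 0.
have h0N : flow_on 1 h0.
  move=> i j Nij; rewrite /h0; case: ifP => // /andP [/eqP i0 /eqP j1].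
  by move: Nij; rewrite i0 j1.
apply: (flow_count1 h0N).
  split=> // k; rewrite /outflow /inflow !big_ord_recr !big_ord0 /=.
  by case: k => [|[|k]] //=; rewrite ltnS leqn0.
move=> h hN [_ hd]; have h00 : h 0 0 = 0 by apply: hN.
have := hd 0 (leq0n _); rewrite /outflow /inflow !big_ord_recr !big_ord0 /= h00 => e.
apply: functional_extensionality => i; apply: functional_extensionality => j.
have [/andP [ij jN]|Nij] := boolP ((i < j) && (j <= 1)); last first.
  rewrite hN // /h0; case: ifP => // /andP [/eqP i0 /eqP j1].
  by move: Nij; rewrite i0 j1.
have [-> ->] : i = 0 /\ j = 1 by lia.
by move: e; rewrite /h0 /rho_demand (hN 1 0) //=; lia.
Qed.

Lemma split_flow_count2 : flow_count 2 (split_flow 2) 1.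
Proof.
pose h0 : flow := fun i j => if ((i == 0) || (i == 1)) && (j == 2) then 1 else 0.
have h0N : flow_on 2 h0.
  move=> i j Nij; rewrite /h0; case: ifP => // /andP [/orP [/eqP i0|/eqP i1] /eqP j2].
    by move: Nij; rewrite i0 j2.
  by move: Nij; rewrite i1 j2.
apply: (flow_count1 h0N).
  split=> //; split=> // k; rewrite /outflow /inflow !big_ord_recr !big_ord0 /=.
  by case: k => [|[|[|k]]] //=.
move=> h hN [[_ hd] h01].
have := hd 0 (leq0n _); have := hd 1 isT.
rewrite /outflow /inflow !big_ord_recr !big_ord0 /= /split_demand /= => e1 e0.
have z00 : h 0 0 = 0 by apply: hN.
have z10 : h 1 0 = 0 by apply: hN.
have z20 : h 2 0 = 0 by apply: hN.
have z11 : h 1 1 = 0 by apply: hN.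
have z21 : h 2 1 = 0 by apply: hN.
apply: functional_extensionality => i; apply: functional_extensionality => j.
have [/andP [ij jN]|Nij] := boolP ((i < j) && (j <= 2)); last first.
  rewrite hN // /h0; case: ifP => // /andP [/orP [/eqP i0|/eqP i1] /eqP j2].
    by move: Nij; rewrite i0 j2.
  by move: Nij; rewrite i1 j2.
have : (i = 0 /\ j = 1) \/ (i = 0 /\ j = 2) \/ (i = 1 /\ j = 2) by lia.
by case=> [[-> ->]|[[-> ->]|[-> ->]]]; rewrite /h0 /=; lia.
Qed.

Section Recursion.
Variables n a b : nat.
Hypothesis count_rho : flow_count n.+1 (rho_flow n.+1) a.
Hypothesis count_split : flow_count n.+2 (split_flow n.+2) b.

Lemma rho_count_edge01_0 : flow_count n.+2 (fun h => rho_flow n.+2 h /\ h 0 1 = 0) a.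
Proof.
apply: (flow_count_ext
  (P := fun h => is_flow n.+2 (rho_demand n.+2) h /\ inflow n.+2 h 1 = 0 /\ True)).
  by move=> h hN; rewrite inflow1 //; split=> [[? []]|[]].
apply: flow_count_del_vertex => //; apply: flow_count_ext count_rho => h _.
by split=> [hd|[hd _]]; first split=> //; apply: is_flow_ext hd; solve_demand.
Qed.

Lemma rho_count_edge01_1 : flow_count n.+2 (fun h => rho_flow n.+2 h /\ h 0 1 = 1) b.
Proof.
apply: (flow_count_ext (P := fun h => rho_flow n.+2 h /\ h 0 1 = 1 /\ True)).
  by move=> h _; split=> [[? []]|[]].
apply: flow_count_edge => //; apply: flow_count_ext count_split => h _.
by split=> [[hd h01]|[hd [h01 _]]]; split=> //; apply: is_flow_ext hd; solve_demand.
Qed.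

Lemma rho_count_edge01_2 : flow_count n.+2 (fun h => rho_flow n.+2 h /\ h 0 1 = 2) a.
Proof.
apply: (flow_count_ext (P := fun h => rho_flow n.+2 h /\ h 0 1 = 2 /\ True)).
  by move=> h _; split=> [[? []]|[]].
apply: flow_count_edge => //.
apply: (flow_count_ext (P := fun h =>
  is_flow n.+2 (demand_shift (rho_demand n.+2) 0 1 2) h /\ inflow n.+2 h 0 = 0 /\ True)).
  move=> h hN; rewrite inflow0 //; split=> [[hd _]|[hd _]]; split=> //.
  by split=> //; have [] := isolated_of_inflow0 (v := 0) hd isT erefl (inflow0 hN) 1.
apply: flow_count_del_vertex => //; apply: flow_count_ext count_rho => h _.
by split=> [hd|[hd _]]; first split=> //; apply: is_flow_ext hd; solve_demand.
Qed.

Lemma rho_flow_count_rec : flow_count n.+2 (rho_flow n.+2) (a + b + a).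
Proof.
apply: (flow_count_ext _ (flow_countU _ (flow_countU _
  rho_count_edge01_0 rho_count_edge01_1) rho_count_edge01_2)).
- move=> h _; split; first by case=> [[[]|[]]|[]].
  move=> hd; have [hN hdem] := hd.
  have : h 0 1 <= 2.
    have := leq_edge_outflow h 0 (isT : 1 <= n.+2).
    by have := hdem 0 isT; rewrite inflow0 // /rho_demand /=; lia.
  by case: (h 0 1) => [|[|[|?]]] //; auto.
- by move=> h [[_ ->]|[_ ->]] [_].
- by move=> h [_ ->] [_].
Qed.

Lemma split_count_edges_00 :
  flow_count n.+3 (fun h => split_flow n.+3 h /\ h 0 2 = 0 /\ h 1 2 = 0) b.
Proof.
apply: (flow_count_ext (P := fun h =>
  is_flow n.+3 (split_demand n.+3) h /\ inflow n.+3 h 2 = 0 /\ h 0 1 = 0)).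
  move=> h hN; rewrite inflow2 //.
  by split=> [[hd [e h01]]|[[hd h01] [-> ->]]]; do ?split => //; lia.
apply: flow_count_del_vertex => //; apply: flow_count_ext count_split => h _.
by split=> [[hd h01]|[hd h01]]; split=> //; apply: is_flow_ext hd; solve_demand.
Qed.

Lemma split_count_edges_10 :
  flow_count n.+3 (fun h => split_flow n.+3 h /\ h 0 2 = 1 /\ h 1 2 = 0) b.
Proof.
apply: (flow_count_ext (P := fun h =>
  is_flow n.+3 (split_demand n.+3) h /\ h 0 2 = 1 /\ (h 0 1 = 0 /\ h 1 2 = 0))).
  by move=> h _; split=> [[hd [? []]]|[[hd ?] []]].
apply: flow_count_edge => //.
apply: (flow_count_ext (P := fun h => is_flow n.+3 (demand_shift (split_demand n.+3) 0 2 1) h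
  /\ inflow n.+3 h 0 = 0 /\ h 1 2 = 0)).
  move=> h hN; rewrite inflow0 //; split=> [[hd [_ h12]]|[hd [_ [_ h12]]]] //.
  have iso0 := isolated_of_inflow0 (v := 0) hd isT erefl (inflow0 hN).
  by split=> //; split; [exact: (iso0 2).1 | split; [exact: (iso0 1).1 | ]].
apply: flow_count_del_vertex => //; apply: flow_count_ext count_split => h _.
by split=> [[hd h01]|[hd h01]]; split=> //; apply: is_flow_ext hd; solve_demand.
Qed.

Lemma split_count_edges_01 :
  flow_count n.+3 (fun h => split_flow n.+3 h /\ h 0 2 = 0 /\ h 1 2 = 1) b.
Proof.
apply: (flow_count_ext (P := fun h =>
  is_flow n.+3 (split_demand n.+3) h /\ h 1 2 = 1 /\ (h 0 1 = 0 /\ h 0 2 = 0))).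
  by move=> h _; split=> [[hd [? []]]|[[hd ?] []]].
apply: flow_count_edge => //.
apply: (flow_count_ext (P := fun h => is_flow n.+3 (demand_shift (split_demand n.+3) 1 2 1) h
  /\ inflow n.+3 h 1 = 0 /\ h 0 2 = 0)).
  move=> h hN; rewrite inflow1 //; split=> [[hd [h01 h02]]|[hd [h12 [h01 h02]]]] //.
  have iso1 := isolated_of_inflow0 (v := 1) hd isT erefl (etrans (inflow1 hN isT) h01).
  by split=> //; split; [exact: (iso1 2).1 | split].
apply: flow_count_del_vertex => //; apply: flow_count_ext count_split => h _.
by split=> [[hd h01]|[hd h01]]; split=> //; apply: is_flow_ext hd; solve_demand.
Qed.

Lemma split_count_edges_11 :
  flow_count n.+3 (fun h => split_flow n.+3 h /\ h 0 2 = 1 /\ h 1 2 = 1) a.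
Proof.
apply: (flow_count_ext (P := fun h =>
  is_flow n.+3 (split_demand n.+3) h /\ h 0 2 = 1 /\ (h 0 1 = 0 /\ h 1 2 = 1))).
  by move=> h _; split=> [[hd [? []]]|[[hd ?] []]].
apply: flow_count_edge => //.
pose d1 := demand_shift (split_demand n.+3) 0 2 1.
apply: (flow_count_ext (P := fun h =>
  is_flow n.+3 d1 h /\ h 1 2 = 1 /\ (h 0 2 = 0 /\ h 0 1 = 0))).
  by move=> h _; split=> [[hd [? []]]|[hd [? []]]].
apply: flow_count_edge => //.
pose d2 := demand_shift d1 1 2 1.
apply: (flow_count_ext (P := fun h => is_flow n.+3 d2 h /\ inflow n.+3 h 0 = 0 /\ h 1 2 = 0)).
  move=> h hN; rewrite inflow0 //; split=> [[hd [_ h12]]|[hd [h12 _]]] //.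
  have iso0 := isolated_of_inflow0 (v := 0) hd isT erefl (inflow0 hN).
  by split=> //; split=> //; split; [exact: (iso0 2).1 | exact: (iso0 1).1].
apply: flow_count_del_vertex => //.
apply: (flow_count_ext (P := fun h =>
  is_flow n.+2 (fun x => d2 (bump 0 x)) h /\ inflow n.+2 h 0 = 0 /\ True)).
  move=> h hN; rewrite inflow0 //; split=> [[hd _]|[hd h01]] //.
  have iso0 := isolated_of_inflow0 (v := 0) hd isT erefl (inflow0 hN).
  by split=> //; exact: (iso0 1).1.
apply: flow_count_del_vertex => //; apply: flow_count_ext count_rho => h _.
by split=> [hd|[hd _]]; first split=> //; apply: is_flow_ext hd; rewrite /d2 /d1; solve_demand.
Qed.

Lemma split_flow_count_rec : flow_count n.+3 (split_flow n.+3) (b + b + b + a).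
Proof.
apply: (flow_count_ext _ (flow_countU _ (flow_countU _ (flow_countU _
  split_count_edges_00 split_count_edges_10) split_count_edges_01) split_count_edges_11)).
- move=> h _; split; first by case=> [[[[]|[]]|[]]|[]].
  move=> hs; have [[hN hdem] h01] := hs.
  have : h 0 2 <= 1.
    have := leq_edge_outflow h 0 (isT : 2 <= n.+3).
    by have := hdem 0 isT; rewrite inflow0 // /split_demand /=; lia.
  have : h 1 2 <= 1.
    have := leq_edge_outflow h 1 (isT : 2 <= n.+3).
    by have := hdem 1 isT; rewrite inflow1 // h01 /split_demand /=; lia.
  by case: (h 1 2) => [|[|?]] //; case: (h 0 2) => [|[|?]] //; auto 6.
- by move=> h [[[_ [-> ->]]|[_ [-> ->]]]|[_ [-> ->]]] [_ []].
- by move=> h [[_ [-> ->]]|[_ [-> ->]]] [_ []].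
- by move=> h [_ [-> ->]] [_ []].
Qed.
End Recursion.

Fixpoint rho_split_counts n : nat * nat :=
  if n is n'.+1 then
    let: (p, q) := rho_split_counts n' in (p + q + p, q + q + q + p)
  else (1, 1).

Lemma rho_split_flow_count n :
  flow_count n.+1 (rho_flow n.+1) (rho_split_counts n).1 /\
  flow_count n.+2 (split_flow n.+2) (rho_split_counts n).2.
Proof.
elim: n => [|n]; first by split; [exact: rho_flow_count1 | exact: split_flow_count2].
rewrite /=; case: (rho_split_counts n) => p q /= [Hp Hq].
by split; [exact: rho_flow_count_rec | exact: split_flow_count_rec].
Qed.

Section ClosedForm.
Local Open Scope ring_scope.
Variable R : rcfType.

Definition kostant_formula (n : nat) : R :=
  ((5 - Num.sqrt 5) ^+ n + (5 + Num.sqrt 5) ^+ n) / (5 * 2 ^+ n).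

Lemma kostant_formula_rec n :
  kostant_formula n.+2 = 5 * kostant_formula n.+1 - 5 * kostant_formula n.
Proof.
rewrite /kostant_formula; set s := Num.sqrt (5 : R).
have s2 : s * s = 5 by rewrite -expr2 sqr_sqrtr // ler0n.
(* (5 - s) / 2 and (5 + s) / 2 are the roots of t^2 = 5 t - 5. *)
have u2 : (5 - s) * (5 - s) = 10 * (5 - s) - 20 by rewrite mulrBl !mulrBr s2; ring.
have v2 : (5 + s) * (5 + s) = 10 * (5 + s) - 20 by rewrite mulrDl !mulrDr s2; ring.
have pow2_neq0 : (2 : R) ^+ n != 0 by rewrite expf_neq0 // pnatr_eq0.
rewrite !exprS !mulrA u2 v2; field.
by rewrite pow2_neq0 /= ?pnatr_eq0.
Qed.

Lemma rho_split_countsE n :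
  (rho_split_counts n).1%:R = kostant_formula n.+1 /\
  (rho_split_counts n).2%:R = kostant_formula n.+2 - 2 * kostant_formula n.+1.
Proof.
elim: n => [|n]; last first.
  rewrite /=; case: (rho_split_counts n) => p q /= [Ep Eq].
  by rewrite !natrD Ep Eq !kostant_formula_rec; split; ring.
rewrite /kostant_formula; set s := Num.sqrt (5 : R).
have s2 : s * s = 5 by rewrite -expr2 sqr_sqrtr // ler0n.
have sq : (5 - s) * (5 - s) + (5 + s) * (5 + s) = 60.
  by transitivity (50 + 2 * (s * s)); [ring | rewrite s2; ring].
by rewrite /= !expr1 !expr2 sq; split; field.
Qed.
End ClosedForm.

Lemma two_rho_coordE r (k : 'I_r.+1) : (0 < r)%N -> two_rho_coord k = rho_demand r k.
Proof.
move=> r_gt0; rewrite /two_rho_coord /rho_demand.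
have -> : (k == ord0) = (k == 0 :> nat) by [].
have -> : (k == ord_max) = (k == r :> nat) by [].
have [-> | k0] := eqVneq (k : nat) 0; last by case: eqP.
by rewrite eq_sym (negbTE (lt0n_neq0 r_gt0)).
Qed.

Local Open Scope ring_scope.

Theorem mainTheorem9 (R : rcfType) (r : nat) (hr : (2 <= r)%N) :
  exists s : seq (multiset_root r),
    kostant_enum (@two_rho_coord r) s /\
    (size s)%:R =
      ((5 - Num.sqrt (5 : R)) ^+ r + (5 + Num.sqrt (5 : R)) ^+ r)
        / (5 * 2 ^+ r).
Proof.
case: r hr => [|r] // hr.
have [[s [uniq_s mem_s size_s]] _] := rho_split_flow_count r.
exists s; split; last by rewrite size_s; have [-> _] := rho_split_countsE R r.
split=> // m; rewrite mem_s; split.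
  by move=> [_ hd] k; rewrite ms_sum_flow hd ?two_rho_coordE // -ltnS.
move=> hm; split; first exact: flow_of_roots_on.
move=> k kr; have := hm (Ordinal (kr : (k < r.+2)%N)).
by rewrite ms_sum_flow two_rho_coordE.
Qed.
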